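(* Let $\pi=(\pi_n^{n+1}\colon(X_{n+1},f_{n+1})\to(X_n,f_n))_{n\ge1}$ be an inverse sequence of equivariant maps and let $(X,f)=\lim_\pi(X_n,f_n)$. Let $\mathcal{C}_\pi=\{(C_n)_{n\ge1}\in\prod_{n\ge1}\mathcal{C}(f_n):\pi_n^{n+1}(C_{n+1})\subset C_n\ \forall n\ge1\}$ and, for $C_\ast=(C_n)_{n\ge1}\in\mathcal{C}_\pi$, $[C_\ast]=\{x=(x_n)_{n\ge1}\in X:x_n\in C_n\ \forall n\ge1\}$. Then $\mathcal{C}(f)=\{[C_\ast]:C_\ast\in\mathcal{C}_\pi\}$.
   Context: Each $X_n$ is a compact metric space, $f_n$ a continuous self-map, $\pi_n^{n+1}\colon X_{n+1}\to X_n$ continuous with $f_n\circ\pi_n^{n+1}=\pi_n^{n+1}\circ f_{n+1}$. $X=\{(x_n)\in\prod_n X_n:\pi_n^{n+1}(x_{n+1})=x_n\ \forall n\}$ with the product topology and $f((x_n))=(f_n(x_n))$. For a continuous map $g$ of a compact metric space $(Y,d)$: a $\delta$-chain is a finite sequence $(y_i)_{i=0}^k$, $k>0$, with $d(g(y_i),y_{i+1})\le\delta$; write $y\to_{g,\delta}z$ if one exists from $y$ to $z$; $CR(g)=\{y:y\to_{g,\delta}y\ \forall\delta>0\}$; for $y,z\in CR(g)$, $y\leftrightarrow_g z$ iff $y\to_{g,\delta}z$ and $z\to_{g,\delta}y$ for all $\delta>0$; the equivalence classes of $\leftrightarrow_g$ are the chain components, and $\mathcal{C}(g)$ is the set of chain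 components. *)

From HB Require Import structures.
From mathcomp Require Import all_boot all_order all_algebra.
From mathcomp Require Import all_classical all_reals all_analysis.
Set Implicit Arguments. Unset Strict Implicit. Unset Printing Implicit Defensive.
Import Order.TTheory GRing.Theory Num.Theory.
Local Open Scope classical_set_scope.
Local Open Scope ring_scope.

(* Chain notions for a map g : Y -> Y on a (pseudo)metric space, restricted to
   a phase space S ⊆ Y (the dynamics g is considered on S, with the metric of
   Y restricted to S).  [ball a δ b] means "d(a,b) < δ". *)
Section Chains.
Context {R : realType} {Y : pseudoMetricType R}.
Variables (S : set Y) (g : Y -> Y).

Definition dchain (delta : R) (y z : Y) : Prop :=
  exists k : nat, (0 < k)%N /\ exists s : nat -> Y,
    [/\ s 0%N = y, s k = z, (forall i, (i <= k)%N -> S (s i)) &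
        (forall i, (i < k)%N -> ball (g (s i)) delta (s i.+1))].

Definition chain_rec : set Y :=
  [set y | S y /\ forall delta : R, 0 < delta -> dchain delta y y].

Definition chain_equiv (y z : Y) : Prop :=
  [/\ chain_rec y, chain_rec z &
      forall delta : R, 0 < delta -> dchain delta y z /\ dchain delta z y].

Definition chain_component (C : set Y) : Prop :=
  exists y, chain_rec y /\ C = [set z | chain_equiv y z].

End Chains.

Definition inv_lim {R : realType} (X : nat -> metricType R)
  (pi : forall n, X n.+1 -> X n) : set (prod_topology X) :=
  [set x | forall n, pi n (x n.+1) = x n].

Definition lim_map {R : realType} (X : nat -> metricType R)
  (f : forall n, X n -> X n) : prod_topology X -> prod_topology X :=
  fun x n => f n (x n).

Definition C_pi {R : realType} (X : nat -> metricType R)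
  (f : forall n, X n -> X n) (pi : forall n, X n.+1 -> X n)
  (C : forall n, set (X n)) : Prop :=
  (forall n, chain_component [set: X n] (f n) (C n)) /\
  (forall n, pi n @` C n.+1 `<=` C n).

Definition thread_set {R : realType} (X : nat -> metricType R)
  (pi : forall n, X n.+1 -> X n) (C : forall n, set (X n)) : set (prod_topology X) :=
  [set x | inv_lim pi x /\ forall n, C n (x n)].

From HB Require Import structures.
From mathcomp Require Import all_boot all_order all_algebra.
From mathcomp Require Import all_classical all_reals all_analysis.
From mathcomp Require Import lra zify.
Set Implicit Arguments. Unset Strict Implicit. Unset Printing Implicit Defensive.
Import Order.TTheory GRing.Theory Num.Theory.
Local Open Scope classical_set_scope.
Local Open Scope ring_scope.

(* Points of the inverse limit are chain recurrent, resp. chain equivalent,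
   exactly when all their coordinates are.  Chains of the limit project to
   chains of every level because the projections are uniformly continuous.
   Conversely, a fine chain of a deep level X_m lifts to a chain of points of
   the product that agree with a thread up to level m; by compactness such
   points lie uniformly close to the inverse limit, and replacing them by
   nearby threads yields a genuine chain of the limit.  Chain components are
   closed, so the thread set of a coherent sequence of chain components is
   nonempty, again by compactness. *)

Lemma unif_continuous_id (U : uniformType) : unif_continuous (@id U).
Proof. by move=> A entA; apply: filterS entA => -[]. Qed.

Lemma unif_continuous_cst (U V : uniformType) (c : V) :
  unif_continuous (fun _ : U => c).
Proof.
move=> A /entourage_refl Acc.
by apply: filterS (@entourageT U); move=> ? _; exact: Acc.
Qed.

Lemma unif_continuous_comp (U V W : uniformType) (g : U -> V) (h : V -> W) :
  unif_continuous g -> unif_continuous h -> unif_continuous (h \o g).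
Proof. by move=> gu hu A /hu /gu. Qed.

Lemma compact_unif_continuous {R : realType} (U V : pseudoMetricType R)
    (g : U -> V) :
  compact [set: U] -> continuous g -> unif_continuous g.
Proof.
move=> /compact_near_coveringP cpt cg; apply/unif_continuousP => e e0.
have e20 : 0 < e / 2 by rewrite divr_gt0.
have : \forall d \near (0 : R)^'+, [set: U] `<=`
    [set a | forall b, ball a d b -> ball (g a) e (g b)].
  apply: cpt => a _.
  have /nbhs_ballP [r /= r0 gr] : nbhs a (g @^-1` ball (g a) (e / 2)).
    by apply: cg; apply: nbhsx_ballx.
  have r20 : 0 < r / 2 by rewrite divr_gt0.
  near=> a' d => b a'b.
  have aa' : ball a (r / 2) a' by near: a'; apply: nbhsx_ballx.
  have dr : d <= r / 2 by near: d; apply: nbhs_right_ltW.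
  have ab : ball a r b.
    by rewrite [r]splitr; apply: ball_triangle aa' (le_ball dr a'b).
  have aa'r : ball a r a' by apply: le_ball aa'; lra.
  by rewrite [e]splitr; apply: ball_triangle (ball_sym (gr _ aa'r)) (gr _ ab).
move=> gd; have : \forall d \near (0 : R)^'+,
    0 < d /\ forall a b, ball a d b -> ball (g a) e (g b).
  near=> d; split; first by near: d; apply: nbhs_right_gt.
  by move=> a; apply: (near gd d).
by case/filter_ex => d [d0 dg]; exists d => // -[a b] /dg.
Unshelve. all: by end_near.
Qed.

Section product_uniformity.
Context {I : Type} {T : I -> uniformType}.
Local Notation P := (prod_topology T).

Lemma prod_entourage_sub (G : set_system (P * P)) : Filter G ->
  (forall i E, entourage E -> G [set uv | E (uv.1 i, uv.2 i)]) ->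
  entourage `<=` G.
Proof.
move=> FG GE A; rewrite /entourage /= /sup_ent /= smallest_filter_finI.
apply; split=> //= _ [[[i B] /= /asboolP [E entE EB]] _ <-] /=.
by apply: filterS (GE i E entE) => -[u v]; apply: EB.
Qed.

Lemma proj_unif_continuous i : unif_continuous (proj i : P -> T i).
Proof.
move=> E entE /=; rewrite /entourage /= /sup_ent /= smallest_filter_finI.
move=> G [_ GF]; apply: GF => /=.
pose p : {classic I} * set (P * P) := (i, [set uv | E (uv.1 i, uv.2 i)]).
suff /asboolP entp : @entourage (initial_topology (@proj _ T i)) p.2.
  by exists (exist _ p entp).
by exists E => // -[].
Qed.

Lemma prod_unif_continuous (U : uniformType) (h : U -> P) :
  (forall i, unif_continuous (proj i \o h)) -> unif_continuous h.
Proof. by move=> hc; apply: prod_entourage_sub => i E /hc. Qed.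

End product_uniformity.

Lemma prod_entourage_agree (T : nat -> uniformType)
    (A : set (prod_topology T * prod_topology T)) :
  entourage A -> exists N, forall u v : prod_topology T,
    (forall n, (n <= N)%N -> u n = v n) -> A (u, v).
Proof.
pose agree N (uv : prod_topology T * prod_topology T) :=
  forall n, (n <= N)%N -> uv.1 n = uv.2 n.
suff : entourage `<=` [set A | exists N, agree N `<=` A].
  by move=> + entA => /(_ A entA) [N NA]; exists N => u v /(NA (u, v)).
apply: prod_entourage_sub.
  apply: Build_Filter.
  - by exists 0%N.
  - move=> A1 A2 [N1 H1] [N2 H2]; exists (maxn N1 N2) => uv uvN.
    split; [apply: H1|apply: H2] => n nN; apply: uvN.
      by rewrite leq_max nN.
    by rewrite leq_max nN orbT.
  - by move=> A1 A2 A12 [N H]; exists N => uv /H /A12.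
move=> i E entE; exists i => -[u v] /(_ i (leqnn i)) /= ->.
exact: entourage_refl.
Qed.

Section metric_product.
Context {R : realType} (X : nat -> metricType R).
Local Notation P := (prod_topology X).

Lemma ball_proj (n : nat) (e : R) : 0 < e ->
  exists2 d, 0 < d & forall u v : P, ball u d v -> ball (u n) e (v n).
Proof.
move=> e0; have /unif_continuousP := @proj_unif_continuous _ X n.
by move=> /(_ e e0) [d d0 H]; exists d => // u v /(H (u, v)).
Qed.

Lemma ball_prod_agree (e : R) : 0 < e ->
  exists N, forall u v : P, (forall n, (n <= N)%N -> u n = v n) -> ball u e v.
Proof.
move=> e0; have [N HN] := prod_entourage_agree (entourage_ball P (PosNum e0)).
by exists N.
Qed.

End metric_product.

Section chains.
Context {R : realType} {Y : pseudoMetricType R}.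
Implicit Types (S : set Y) (g : Y -> Y) (a b c : Y) (e : R).

Lemma le_dchain S g e e' a b : e <= e' -> dchain S g e a b -> dchain S g e' a b.
Proof.
move=> ee' [k [k0 [s [s0 sk sS sb]]]]; exists k; split => //; exists s.
by split => // i ik; exact: le_ball ee' _ (sb i ik).
Qed.

Lemma dchain_cat S g e a b c :
  dchain S g e a b -> dchain S g e b c -> dchain S g e a c.
Proof.
move=> [k1 [k10 [s1 [s10 s1k s1S s1b]]]] [k2 [k20 [s2 [s20 s2k s2S s2b]]]].
exists (k1 + k2)%N; split; first by rewrite addn_gt0 k10.
exists (fun i => if (i <= k1)%N then s1 i else s2 (i - k1)%N); split.
- by rewrite leq0n.
- by rewrite ifF ?addKn //; apply/negbTE; rewrite -ltnNge; lia.
- move=> i ik; case: ifP => ik1; first exact: s1S.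
  by apply: s2S; rewrite leq_subLR.
- move=> i ik; case: (ltngtP i k1) => ik1.
  + exact: s1b.
  + by rewrite subSn 1?ltnW //; apply: s2b; lia.
  + by rewrite ik1 subSnn s1k -s20; apply: s2b.
Qed.

Lemma dchain_ball_start S g e e' a a' b : 0 <= e' -> S a' ->
  ball (g a') e' (g a) -> dchain S g e a b -> dchain S g (e' + e) a' b.
Proof.
move=> e'0 Sa' a'a [k [k0 [s [s0 sk sS sb]]]]; exists k; split => //.
exists (fun i => if i == 0%N then a' else s i); split => //.
- by rewrite ifN // -lt0n.
- by move=> i ik; case: eqP => // _; exact: sS.
- move=> i ik; case: eqP => [->|_].
    by rewrite -s0 in a'a; exact: ball_triangle a'a (sb 0%N k0).
  by apply: le_ball (sb i ik); rewrite lerDr.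
Qed.

Lemma dchain_ball_end S g e e' a b b' : 0 <= e' -> S b' ->
  dchain S g e a b -> ball b e' b' -> dchain S g (e + e') a b'.
Proof.
move=> e'0 Sb' [k [k0 [s [s0 sk sS sb]]]] bb'; exists k; split => //.
exists (fun i => if i == k then b' else s i); split => //.
- by rewrite ifN // eq_sym -lt0n.
- by rewrite eqxx.
- by move=> i ik; case: eqP => // _; exact: sS.
- move=> i ik; rewrite ltn_eqF //; case: eqP => [ik1|_].
    by rewrite -sk -ik1 in bb'; exact: ball_triangle (sb i ik) bb'.
  by apply: le_ball (sb i ik); rewrite lerDl.
Qed.

Lemma dchain_retract S g r e1 e2 a b : 0 < r ->
  (forall u v, ball u r v -> ball (g u) e1 (g v)) -> S a -> S b ->
  dchain [set y | exists2 w, S w & ball y r w] g e2 a b ->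
  dchain S g (e1 + e2 + r) a b.
Proof.
move=> r0 gr Sa Sb [k [k0 [s [s0 sk sN sb]]]].
have /choice [w wP] : forall y, exists w,
    (S y -> w = y) /\ ((exists2 w, S w & ball y r w) -> S w /\ ball y r w).
  move=> y; have [Sy|nSy] := pselect (S y).
    by exists y; split => // _; split => //; exact: ballxx.
  have [[w Sw yw]|nNy] := pselect (exists2 w, S w & ball y r w).
    by exists w; split.
  by exists y; split.
have wS i : (i <= k)%N -> S (w (s i)) /\ ball (s i) r (w (s i)).
  by move=> ik; apply: (wP _).2; exact: sN.
exists k; split => //; exists (w \o s); split => /=.
- by rewrite s0 (wP a).1.
- by rewrite sk (wP b).1.
- by move=> i /wS [].
- move=> i ik; have [_ wsi] := wS i (ltnW ik); have [_ wsi1] := wS i.+1 ik.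
  exact: ball_triangle (ball_triangle (ball_sym (gr _ _ wsi)) (sb i ik)) wsi1.
Qed.

Lemma chain_equiv_sym S g a b : chain_equiv S g a b -> chain_equiv S g b a.
Proof. by move=> [ca cb ab]; split => // e e0; have [] := ab e e0. Qed.

Lemma chain_equiv_trans S g a b c :
  chain_equiv S g a b -> chain_equiv S g b c -> chain_equiv S g a c.
Proof.
move=> [ca _ ab] [_ cc bc]; split => // e e0.
have [? ?] := ab e e0; have [? ?] := bc e e0.
by split; apply: dchain_cat; eassumption.
Qed.

Lemma chain_equiv_refl S g a : chain_rec S g a -> chain_equiv S g a a.
Proof. by move=> [Sa aa]; split => // e e0; split; apply: aa. Qed.

Lemma chain_componentE S g C a : chain_component S g C -> C a ->
  C = [set b | chain_equiv S g a b].
Proof.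
move=> [c [_ ->]] /= ca; apply/seteqP; split => b /=.
  exact: chain_equiv_trans (chain_equiv_sym ca).
exact: chain_equiv_trans ca.
Qed.

Lemma chain_class_closed g c z : continuous g ->
  (forall e, 0 < e -> exists2 z', chain_equiv setT g c z' & ball z e z') ->
  chain_equiv setT g c z.
Proof.
move=> gc near_z.
have cz d : 0 < d -> dchain setT g d c z.
  move=> d0; have d20 : 0 < d / 2 by rewrite divr_gt0.
  have [z' [_ _ /(_ _ d20) [cz' _]] zz'] := near_z _ d20.
  rewrite [d]splitr; apply: dchain_ball_end cz' (ball_sym zz') => //.
  exact: ltW.
have zc d : 0 < d -> dchain setT g d z c.
  move=> d0; have d20 : 0 < d / 2 by rewrite divr_gt0.
  have /nbhs_ballP [r /= r0 gr] : nbhs z (g @^-1` ball (g z) (d / 2)).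
    by apply: gc; apply: nbhsx_ballx.
  have [z' [_ _ /(_ _ d20) [_ z'c]] zz'] := near_z _ r0.
  rewrite [d]splitr; apply: dchain_ball_start (gr _ zz') z'c => //.
  exact: ltW.
have [z' [cc _ _] _] := near_z _ ltr01.
split=> //; first by split=> // e e0; exact: dchain_cat (zc _ e0) (cz _ e0).
by move=> e e0; split; [exact: cz | exact: zc].
Qed.

End chains.

Lemma dchain_map {R : realType} (Y1 Y2 : pseudoMetricType R)
    (S1 : set Y1) (S2 : set Y2) (g1 : Y1 -> Y1) (g2 : Y2 -> Y2) (h : Y1 -> Y2)
    (e1 e2 : R) a b :
  (forall y, S1 y -> S2 (h y)) ->
  (forall u v, ball (g1 u) e1 v -> ball (g2 (h u)) e2 (h v)) ->
  dchain S1 g1 e1 a b -> dchain S2 g2 e2 (h a) (h b).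
Proof.
move=> hS hb [k [k0 [s [s0 sk sS sb]]]]; exists k; split => //.
exists (h \o s); split => /=; first by rewrite s0.
- by rewrite sk.
- by move=> i ik; apply/hS/sS.
- by move=> i ik; apply/hb/sb.
Qed.

Section semiconjugacy.
Context {R : realType} {Y1 Y2 : pseudoMetricType R}.
Variables (S1 : set Y1) (S2 : set Y2) (g1 : Y1 -> Y1) (g2 : Y2 -> Y2).
Variable h : Y1 -> Y2.
Hypotheses (h_unif : unif_continuous h) (hg : g2 \o h = h \o g1)
  (hS : forall y, S1 y -> S2 (h y)).

Lemma dchain_semiconj a b : (forall d, 0 < d -> dchain S1 g1 d a b) ->
  forall e, 0 < e -> dchain S2 g2 e (h a) (h b).
Proof.
move=> ab e e0; have /unif_continuousP /(_ e e0) [d d0 hd] := h_unif.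
apply: dchain_map hS _ (ab d d0) => u v uv.
have -> : g2 (h u) = h (g1 u) by exact: (congr1 (@^~ u) hg).
exact: (hd (g1 u, v)).
Qed.

Lemma chain_rec_semiconj a : chain_rec S1 g1 a -> chain_rec S2 g2 (h a).
Proof. by move=> [S1a aa]; split; [exact: hS | exact: dchain_semiconj]. Qed.

Lemma chain_equiv_semiconj a b :
  chain_equiv S1 g1 a b -> chain_equiv S2 g2 (h a) (h b).
Proof.
move=> [ca cb ab]; split; [exact: chain_rec_semiconj..|] => e e0.
by split; apply: dchain_semiconj e0 => d d0; have [] := ab d d0.
Qed.

End semiconjugacy.

Lemma cluster_seq_ball {R : realType} {T : pseudoMetricType R} (q : nat -> T) p :
  cluster (q @ \oo) p ->
  forall e, 0 < e -> forall J, exists2 j, (J <= j)%N & ball p e (q j).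
Proof.
move=> qp e e0 J; have qJ : (q @ \oo) (q @` [set j | (J <= j)%N]).
  by exists J => // j Jj; exists j.
by have [_ [[j Jj <-] pqj]] := qp _ _ qJ (nbhsx_ballx p e e0); exists j.
Qed.

Unset Implicit Arguments.

Section inverse_limit.
Context {R : realType} (X : nat -> metricType R) (pi : forall n, X n.+1 -> X n).
Hypotheses (X_compact : forall n, compact [set: X n])
  (pi_continuous : forall n, continuous (pi n)).
Local Notation P := (prod_topology X).
Local Notation IL := (inv_lim pi).

Lemma prod_compact : compact [set: P].
Proof.
have -> : [set: P] = [set u : P | forall n, [set: X n] (u n)] by apply/seteqP.
by apply: (@tychonoff _ (fun n => X n : topologicalType) (fun n => [set: X n])).
Qed.

Lemma inv_lim_cluster (q : nat -> P) p :
  (forall j n, (n < j)%N -> pi n (q j n.+1) = q j n) ->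
  cluster (q @ \oo) p -> IL p.
Proof.
move=> qc qp n; apply: (close_eq (@metric_hausdorff _ (X n))).
rewrite ball_close => eps; have : 0 < eps%:num by [].
move: (eps%:num) => e e0; have e20 : 0 < e / 2 by rewrite divr_gt0.
have /nbhs_ballP [r /= r0 pir] :
    nbhs (p n.+1) (pi n @^-1` ball (pi n (p n.+1)) (e / 2)).
  by apply: pi_continuous; apply: nbhsx_ballx.
have [d1 d10 pd1] := ball_proj X n.+1 r0.
have [d2 d20 pd2] := ball_proj X n e20.
have d0 : 0 < Num.min d1 d2 by rewrite lt_min d10.
have [j nj pqj] := cluster_seq_ball qp d0 n.+1.
have [pqj1 pqj2] : ball p d1 (q j) /\ ball p d2 (q j).
  by split; apply: le_ball pqj; rewrite ge_min lexx ?orbT.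
rewrite [e]splitr; apply: (@ball_triangle _ _ (q j n)); last exact/ball_sym/pd2.
by rewrite -(qc j n nj); exact/pir/pd1.
Qed.

Lemma inv_lim_approx rho : 0 < rho -> exists m0, forall u : P,
  (forall n, (n < m0)%N -> pi n (u n.+1) = u n) ->
  exists2 w, IL w & ball u rho w.
Proof.
move=> rho0; apply: contrapT => /forallNP no_m0.
have /choice [q qP] : forall m, exists u : P,
    (forall n, (n < m)%N -> pi n (u n.+1) = u n) /\
    ~ exists2 w, IL w & ball u rho w.
  move=> m; apply: contrapT => /forallNP no_u; apply: (no_m0 m) => u uc.
  by apply: contrapT => nw; apply: (no_u u).
have [p [_ qp]] := prod_compact _ _ (@filterT _ (q @ \oo) _).
have ILp := inv_lim_cluster q p (fun j => (qP j).1) qp.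
have [j _ pqj] := cluster_seq_ball qp rho0 0%N.
by apply: (qP j).2; exists p => //; exact: ball_sym.
Qed.

(* [lift d m z] is the thread of z up to level m, continued by d above m. *)
Fixpoint lift (d : P) (m : nat) : X m -> P :=
  match m return X m -> P with
  | 0 => fun z => dfwith d 0%N z
  | m'.+1 => fun z => dfwith (lift d m' (pi m' z)) m'.+1 z
  end.

Lemma lift_top d m z : lift d m z m = z.
Proof. by case: m z => [|m] z /=; rewrite dfwithin. Qed.

Lemma lift_gt d m z n : (m < n)%N -> lift d m z n = d n.
Proof.
elim: m z => [|m IH] z mn /=; first by rewrite dfwithout //; lia.
by rewrite dfwithout ?IH //; lia.
Qed.

Lemma lift_cons d m z n : (n < m)%N -> pi n (lift d m z n.+1) = lift d m z n.
Proof.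
elim: m z => [//|m IH] z /=; rewrite ltnS leq_eqVlt => /orP [/eqP -> | nm].
  by rewrite dfwithin dfwithout ?lift_top //; lia.
by rewrite !dfwithout ?IH //; lia.
Qed.

Lemma lift_inv_lim_le d x m n : IL x -> (n <= m)%N -> lift d m (x m) n = x n.
Proof.
move=> ILx; elim: m n => [|m IH] n /=.
  by rewrite leqn0 => /eqP ->; rewrite dfwithin.
rewrite leq_eqVlt => /orP [/eqP -> | nm]; first by rewrite dfwithin.
by rewrite dfwithout ?ILx ?IH //; lia.
Qed.

Lemma lift_inv_lim x m : IL x -> lift x m (x m) = x.
Proof.
move=> ILx; apply: functional_extensionality_dep => n.
by case: (leqP n m) => [/(lift_inv_lim_le x x m n ILx)|/lift_gt].
Qed.

Lemma lift_in (C : forall n, set (X n)) d m z n :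
  (forall n, pi n @` C n.+1 `<=` C n) -> C m z -> (n <= m)%N ->
  C n (lift d m z n).
Proof.
move=> piC; elim: m z => [|m IH] z Cz /=.
  by rewrite leqn0 => /eqP ->; rewrite dfwithin.
rewrite leq_eqVlt => /orP [/eqP -> | nm]; first by rewrite dfwithin.
by rewrite dfwithout; [apply: IH => //; apply: piC; exists z | lia].
Qed.

Lemma lift_unif_continuous d m : unif_continuous (lift d m).
Proof.
apply: prod_unif_continuous => n; elim: m n => [|m IH] n.
  have [->|n0] := eqVneq n 0%N.
    have -> : proj 0 \o lift d 0 = id by apply: funext => z; rewrite /= projK.
    exact: unif_continuous_id.
  have -> : proj n \o lift d 0 = fun=> d n.
    by apply: funext => z; rewrite /= /proj dfwithout // eq_sym.
  exact: unif_continuous_cst.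
have [->|nm] := eqVneq n m.+1.
  have -> : proj m.+1 \o lift d m.+1 = id.
    by apply: funext => z; rewrite /= projK.
  exact: unif_continuous_id.
have -> : proj n \o lift d m.+1 = (proj n \o lift d m) \o pi m.
  by apply: funext => z; rewrite /= /proj dfwithout // eq_sym.
have pi_unif := compact_unif_continuous (X_compact m.+1) (pi_continuous m).
exact: unif_continuous_comp pi_unif (IH n).
Qed.

Variable f : forall n, X n -> X n.
Hypotheses (f_continuous : forall n, continuous (f n))
  (f_pi : forall n, f n \o pi n = pi n \o f n.+1).
Local Notation F := (lim_map f).

Lemma proj_lim_map n : f n \o proj n = proj n \o F.
Proof. by []. Qed.

Lemma lim_map_unif_continuous : unif_continuous F.
Proof.
apply: prod_unif_continuous => n; rewrite -proj_lim_map.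
have f_unif := compact_unif_continuous (X_compact n) (f_continuous n).
exact: unif_continuous_comp (@proj_unif_continuous _ X n) f_unif.
Qed.

Lemma lift_lim_map d m z n : (n <= m)%N -> F (lift d m z) n = lift d m (f m z) n.
Proof.
rewrite /lim_map; elim: m z n => [|m IH] z n /=.
  by rewrite leqn0 => /eqP ->; rewrite !dfwithin.
rewrite leq_eqVlt => /orP [/eqP -> | nm]; first by rewrite !dfwithin.
rewrite !dfwithout; [|lia|lia]; rewrite IH; last by lia.
by congr (lift d m _ n); exact: (congr1 (@^~ z) (f_pi m)).
Qed.

Lemma lift_dchain x y : IL x -> IL y ->
  (forall n e, 0 < e -> dchain setT (f n) e (x n) (y n)) ->
  forall delta, 0 < delta -> dchain IL F delta x y.
Proof.
(* delta = (eps + eps) + eps + (eps + r) with r <= eps: the lifted steps, the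
   final jump to y, and the retraction onto the inverse limit. *)
move=> ILx ILy xy delta delta0; pose eps := delta / 5.
have eps0 : 0 < eps by rewrite divr_gt0.
have /unif_continuousP /(_ eps eps0) [r0 r00 Fr0] := lim_map_unif_continuous.
pose r := Num.min r0 eps; have r0r : 0 < r by rewrite lt_min r00.
have [m0 approx] := inv_lim_approx r r0r.
have [N agree] := ball_prod_agree X eps0.
pose m := (m0 + N)%N.
have /unif_continuousP /(_ eps eps0) [k k0 liftk] := lift_unif_continuous x m.
pose Nr := [set u : P | exists2 w, IL w & ball u r w].
have lifted : dchain Nr F (eps + eps) x (lift x m (y m)).
  rewrite -{1}(lift_inv_lim x m ILx).
  apply: (dchain_map (h := lift x m) _ _ (xy m k k0)) => [z _|u v uv].
    by apply: approx => n nm; apply: lift_cons; lia.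
  apply: ball_triangle (liftk (f m u, v) uv).
  by apply: agree => n nN; rewrite lift_lim_map //; lia.
have moved : dchain Nr F (eps + eps + eps) x y.
  apply: dchain_ball_end lifted _ => //; first exact: ltW.
    by exists y => //; exact: ballxx.
  by apply: agree => n nN; apply: lift_inv_lim_le => //; lia.
have Fr u v : ball u r v -> ball (F u) eps (F v).
  by move=> uv; apply: (Fr0 (u, v)); apply: le_ball uv; rewrite ge_min lexx.
apply: le_dchain (dchain_retract r0r Fr ILx ILy moved).
have : r <= eps by rewrite ge_min lexx orbT.
rewrite /eps; lra.
Qed.

Lemma chain_rec_inv_limE x :
  chain_rec IL F x <-> IL x /\ forall n, chain_rec setT (f n) (x n).
Proof.
split=> [cx | [ILx xx]].
  split=> [|n]; first by case: cx.
  have proj_unif := @proj_unif_continuous _ X n.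
  exact: chain_rec_semiconj proj_unif (proj_lim_map n) _ _ cx.
by split=> // d d0; apply: lift_dchain => // n e e0; case: (xx n) => _; apply.
Qed.

Lemma chain_equiv_inv_limE x z : chain_equiv IL F x z <->
  [/\ IL x, IL z & forall n, chain_equiv setT (f n) (x n) (z n)].
Proof.
split=> [[cx cz xz] | [ILx ILz xz]].
  have [ILx _] := (chain_rec_inv_limE x).1 cx.
  have [ILz _] := (chain_rec_inv_limE z).1 cz.
  split=> // n.
  have proj_unif := @proj_unif_continuous _ X n.
  exact: chain_equiv_semiconj proj_unif (proj_lim_map n) _ _ _ (And3 cx cz xz).
split; [apply/chain_rec_inv_limE; split => // n; by case: (xz n)..|].
move=> d d0; split; apply: lift_dchain => // n e e0;
  by case: (xz n) => _ _ /(_ e e0) [].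
Qed.

Lemma chain_equiv_pi n a b : chain_equiv setT (f n.+1) a b ->
  chain_equiv setT (f n) (pi n a) (pi n b).
Proof.
have pi_unif := compact_unif_continuous (X_compact n.+1) (pi_continuous n).
exact: chain_equiv_semiconj pi_unif (f_pi n) _ a b.
Qed.

Lemma thread_set_nonempty Cs : C_pi f pi Cs -> exists x, thread_set pi Cs x.
Proof.
move=> [Cs_comp piCs].
have Cs_ne n : exists y, Cs n y.
  by have [y [yy ->]] := Cs_comp n; exists y; exact: chain_equiv_refl.
pose c : P := fun n => projT1 (cid (Cs_ne n)).
have cC n : Cs n (c n) := projT2 (cid (Cs_ne n)).
pose q m := lift c m (c m).
have [p [_ qp]] := prod_compact _ _ (@filterT _ (q @ \oo) _).
exists p; split.
  exact: inv_lim_cluster q p (fun j => lift_cons c j (c j)) qp.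
move=> n; have [y [_ Csn]] := Cs_comp n; rewrite Csn.
apply: chain_class_closed (f_continuous n) _ => e e0.
have [d d0 pd] := ball_proj X n e0.
have [j nj pqj] := cluster_seq_ball qp d0 n.
exists (q j n); last exact: pd.
by move: (lift_in Cs c j (c j) n piCs (cC j) nj); rewrite Csn.
Qed.

Lemma chain_component_thread_set C : chain_component IL F C ->
  exists2 Cs, C_pi f pi Cs & thread_set pi Cs = C.
Proof.
move=> [y [cy ->]]; have [ILy cyn] := (chain_rec_inv_limE y).1 cy.
exists (fun n => [set z | chain_equiv setT (f n) (y n) z]).
  split=> [n|n _ [z yz <-]]; first by exists (y n).
  by rewrite /= -(ILy n); exact: chain_equiv_pi.
apply/seteqP; split=> z.
  by move=> [ILz yz]; apply/chain_equiv_inv_limE.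
by move=> /chain_equiv_inv_limE [].
Qed.

Lemma thread_set_chain_component Cs : C_pi f pi Cs ->
  chain_component IL F (thread_set pi Cs).
Proof.
move=> Cs_pi; have [x [ILx xCs]] := thread_set_nonempty Cs Cs_pi.
have CsE n : Cs n = [set z | chain_equiv setT (f n) (x n) z].
  exact: chain_componentE (Cs_pi.1 n) (xCs n).
have cx : chain_rec IL F x.
  by apply/chain_rec_inv_limE; split=> // n; move: (xCs n); rewrite CsE => -[].
exists x; split=> //; apply/seteqP; split=> z.
  move=> [ILz zCs]; apply/chain_equiv_inv_limE; split=> // n.
  by move: (zCs n); rewrite CsE.
by move=> /chain_equiv_inv_limE [_ ILz xz]; split=> // n; rewrite CsE; exact: xz.
Qed.

End inverse_limit.

Theorem lemma3p2 (R : realType) (X : nat -> metricType R)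
  (f : forall n, X n -> X n) (pi : forall n, X n.+1 -> X n)
  (hcpt : forall n, compact [set: X n])
  (hf : forall n, continuous (f n))
  (hpi : forall n, continuous (pi n))
  (heq : forall n, f n \o pi n = pi n \o f n.+1) :
  [set C | chain_component (inv_lim pi) (lim_map f) C] =
  [set thread_set pi C | C in [set C | C_pi f pi C]].
Proof.
apply/seteqP; split=> [C | _ [Cs Cs_pi <-]].
  move=> /(chain_component_thread_set X pi hcpt hpi f hf heq) [Cs Cs_pi <-].
  by exists Cs.
exact: thread_set_chain_component X pi hcpt hpi f hf heq Cs Cs_pi.
Qed.
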